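(* Let $H$ be a subgroup of Thompson's group $F$. Assume that for every pair of finite binary words $u$ and $v$, each of which contains both digits $0$ and $1$, there is an element $h\in H$ with the pair of branches $u\rightarrow v$. Then $\mathrm{Cl}(H)$ contains the derived subgroup $[F,F]$.
   Context: Thompson's group $F$ is the group of all piecewise linear homeomorphisms of $[0,1]$ with finitely many breakpoints, all breakpoints dyadic fractions and all slopes integer powers of $2$. For a finite binary word $u$, let $[u]$ denote the dyadic interval $[.u,\,.u111\ldots]$ (numbers whose binary expansion begins with $u$). An element $h\in F$ has the pair of branches $u\rightarrow v$ if $h$ maps $[u]$ linearly onto $[v]$, i.e. $h(.u\alpha)=.v\alpha$ for every infinite binary word $\alpha$. For $H\le F$, the closure $\mathrm{Cl}(H)$ is the subgroup of $F$ consisting of all piecewise-$H$ functions: those $f\in F$ for which there is a finite subdivision of $[0,1]$ into intervals such that on each interval $f$ coincides with some element of $H$. *)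

From Stdlib Require Import Reals ZArith List.
Open Scope R_scope.

(* Maps R -> R; elements of F are extended by the identity outside [0,1]. *)
Definition fn := R -> R.

Definition dyadic (x : R) : Prop :=
  exists (a : Z) (k : nat), x = IZR a / 2 ^ k.

(* Thompson's group F: piecewise linear homeomorphisms of [0,1] with finitely
   many dyadic breakpoints and slopes integer powers of 2.  A finite subdivision
   0 = p 0 < p 1 < ... < p n = 1 by dyadic points, on each piece f is affine
   with slope 2^(m i); together with f 0 = 0, f 1 = 1 this makes f an
   increasing PL homeomorphism of [0,1]. *)
Definition inF (f : fn) : Prop :=
  (forall x, (x < 0 \/ 1 < x) -> f x = x) /\ f 0 = 0 /\ f 1 = 1 /\
  exists (n : nat) (p : nat -> R) (m : nat -> Z) (b : nat -> R),
    p 0%nat = 0 /\ p n = 1 /\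
    (forall i, (i < n)%nat -> p i < p (S i) /\ dyadic (p i)) /\
    (forall i, (i < n)%nat -> forall x, p i <= x <= p (S i) ->
        f x = powerRZ 2 (m i) * x + b i).

Definition is_inv (g f : fn) : Prop := forall x, g (f x) = x /\ f (g x) = x.

Record subgroupF (H : fn -> Prop) : Prop := {
  sub_F : forall h, H h -> inF h;
  sub_id : H (fun x => x);
  sub_comp : forall a b, H a -> H b -> H (fun x => a (b x));
  sub_inv : forall a b, H a -> is_inv b a -> H b
}.

(* Binary words as lists of booleans (true = digit 1); .u = value of 0.u in base 2 *)
Fixpoint wval (u : list bool) : R :=
  match u with
  | nil => 0
  | d :: u' => ((if d then 1 else 0) + wval u') / 2
  end.

(* [u] = [.u, .u111...] = [.u, .u + 2^-|u|] *)
Definition in_word (u : list bool) (x : R) : Prop :=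
  wval u <= x <= wval u + / 2 ^ length u.

(* h has the pair of branches u -> v: h maps [u] linearly onto [v],
   h(.u alpha) = .v alpha. *)
Definition has_branches (h : fn) (u v : list bool) : Prop :=
  forall x, in_word u x ->
    h x = wval v + (x - wval u) * 2 ^ length u / 2 ^ length v.

Definition has_both_digits (u : list bool) : Prop := In true u /\ In false u.

Definition Cl (H : fn -> Prop) (f : fn) : Prop :=
  inF f /\
  exists (n : nat) (p : nat -> R),
    p 0%nat = 0 /\ p n = 1 /\
    (forall i, (i < n)%nat -> p i < p (S i)) /\
    (forall i, (i < n)%nat -> exists h, H h /\
        forall x, p i <= x <= p (S i) -> f x = h x).

Inductive derivedF : fn -> Prop :=
| dF_comm : forall f g fi gi, inF f -> inF g -> is_inv fi f -> is_inv gi g ->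
    derivedF (fun x => fi (gi (f (g x))))
| dF_id : derivedF (fun x => x)
| dF_comp : forall a b, derivedF a -> derivedF b -> derivedF (fun x => a (b x))
| dF_inv : forall a b, derivedF a -> is_inv b a -> derivedF b.

(* Every element of F has a normal form on a fine uniform dyadic grid: each grid
   interval [u] is mapped affinely onto some dyadic interval [v].  This form is
   stable under composition and inversion, so F is a group.  An element f of
   [F,F] is injective and, being built from commutators of maps that are linear
   near 0 and near 1, it is the identity near both endpoints.  On a grid finer
   than that neighbourhood the two outer pieces are handled by the identity of H,
   while for an inner piece [u] the image [v] is inner too, so both words contain
   both digits and the element of H with branches u -> v agrees with f on [u]. *)

From Stdlib Require Import Reals ZArith List Lra Lia FinFun.
Open Scope R_scope.

Lemma pow2_pos K : 0 < 2 ^ K.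
Proof. apply pow_lt; lra. Qed.

Lemma INR_pow2 K : INR (2 ^ K) = 2 ^ K.
Proof. rewrite pow_INR; simpl; f_equal; ring. Qed.

Lemma IZR_pow2 K : IZR (Z.of_nat (2 ^ K)) = 2 ^ K.
Proof. rewrite <- INR_IZR_INZ; apply INR_pow2. Qed.

Lemma INR_lt_pow2 a K : (a < 2 ^ K)%nat <-> INR a + 1 <= 2 ^ K.
Proof.
  rewrite <- S_INR, <- INR_pow2; split.
  - intros H; apply le_INR; lia.
  - intros H; apply INR_le in H; lia.
Qed.

Lemma Z_le_of_IZR_le_half p q : IZR p <= IZR q + / 2 -> (p <= q)%Z.
Proof.
  intros H; destruct (Z_le_gt_dec p q) as [|Hgt]; [assumption|].
  assert (IZR (q + 1) <= IZR p) by (apply IZR_le; lia).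
  rewrite plus_IZR in *; lra.
Qed.

Lemma finite_bound n (P : nat -> nat -> Prop) :
  (forall i, (i < n)%nat -> exists L, P i L) ->
  exists N, forall i, (i < n)%nat -> exists L, (L <= N)%nat /\ P i L.
Proof.
  induction n as [|n IH]; intros H.
  - exists 0%nat; intros; lia.
  - destruct IH as [N HN]; [intros i Hi; apply H; lia|].
    destruct (H n) as [Ln HLn]; [lia|].
    exists (Nat.max N Ln); intros i Hi.
    destruct (Nat.eq_dec i n) as [->|Hne].
    + exists Ln; split; [lia|assumption].
    + destruct (HN i) as [L [HL HP]]; [lia|]; exists L; split; [lia|assumption].
Qed.

Lemma finite_choice {A : Type} (a0 : A) n (P : nat -> A -> Prop) :
  (forall i, (i < n)%nat -> exists x, P i x) ->
  exists F, forall i, (i < n)%nat -> P i (F i).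
Proof.
  induction n as [|n IH]; intros H.
  - exists (fun _ => a0); intros; lia.
  - destruct IH as [F HF]; [intros i Hi; apply H; lia|].
    destruct (H n) as [xn Hxn]; [lia|].
    exists (fun i => if Nat.eqb i n then xn else F i); intros i Hi.
    destruct (Nat.eqb_spec i n) as [->|Hne]; [assumption|apply HF; lia].
Qed.

Lemma eventually_all n (Q : nat -> nat -> Prop) :
  (forall i, (i < n)%nat -> exists K0, forall K, (K0 <= K)%nat -> Q i K) ->
  exists K, forall i, (i < n)%nat -> Q i K.
Proof.
  intros H; destruct (finite_bound n (fun i K0 => forall K, (K0 <= K)%nat -> Q i K) H)
    as [N HN].
  exists N; intros i Hi; destruct (HN i Hi) as [K0 [HK0 HQ]]; auto.
Qed.

(** * Dyadic pieces *)

(* The dyadic interval [r / 2^K, (r + 1) / 2^K], kept in scaled form so that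
   most estimates are linear. *)
Definition piece (r : R) (K : nat) (x : R) : Prop := r <= x * 2 ^ K <= r + 1.

Lemma div_pow2_scaled r K : r / 2 ^ K * 2 ^ K = r.
Proof. pose proof (pow2_pos K); field; lra. Qed.

Definition midpoint (r : R) (K : nat) : R := (r + / 2) / 2 ^ K.

Lemma midpoint_scaled r K : midpoint r K * 2 ^ K = r + / 2.
Proof. apply div_pow2_scaled. Qed.

Lemma piece_iff r K x : piece r K x <-> r / 2 ^ K <= x <= (r + 1) / 2 ^ K.
Proof.
  pose proof (pow2_pos K).
  assert (Hdiv : forall a b, a <= b <-> a / 2 ^ K <= b / 2 ^ K).
  { intros a b; split; intros Hab.
    - apply Rmult_le_compat_r; [left; apply Rinv_0_lt_compat|]; assumption.
    - apply (Rmult_le_reg_r (/ 2 ^ K)); [apply Rinv_0_lt_compat|]; assumption. }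
  unfold piece; rewrite (Hdiv r), (Hdiv _ (r + 1)), Rmult_div_l by lra; reflexivity.
Qed.

Lemma piece_unit a K x : (a < 2 ^ K)%nat -> piece (INR a) K x -> 0 <= x <= 1.
Proof.
  rewrite INR_lt_pow2; unfold piece; intros Ha Hx.
  pose proof (pow2_pos K); pose proof (pos_INR a); split; nra.
Qed.

(* Two dyadic intervals are nested or have disjoint interiors, so a finer one
   lies inside a coarser one as soon as its midpoint does. *)
Lemma piece_nested (c d : Z) L i :
  piece (IZR c) L (midpoint (IZR d) (L + i)) ->
  forall x, piece (IZR d) (L + i) x -> piece (IZR c) L x.
Proof.
  unfold piece; intros Hm x Hx.
  pose proof (midpoint_scaled (IZR d) (L + i)) as Em.
  set (m := midpoint (IZR d) (L + i)) in *.
  rewrite pow_add in Em, Hx.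
  pose proof (pow2_pos L); pose proof (pow2_pos i).
  assert (Hlo : (c * Z.of_nat (2 ^ i) <= d)%Z).
  { apply Z_le_of_IZR_le_half; rewrite mult_IZR, IZR_pow2; nra. }
  assert (Hhi : (d + 1 <= (c + 1) * Z.of_nat (2 ^ i))%Z).
  { apply Z_le_of_IZR_le_half; rewrite mult_IZR, !plus_IZR, IZR_pow2; nra. }
  apply IZR_le in Hlo, Hhi; rewrite !mult_IZR, !plus_IZR, !IZR_pow2 in *.
  rewrite <- Rmult_assoc in Hx.
  split; apply (Rmult_le_reg_r (2 ^ i)); lra.
Qed.

Lemma piece_cover K x : 0 <= x <= 1 -> exists a, (a < 2 ^ K)%nat /\ piece (INR a) K x.
Proof.
  intros Hx; induction K as [|K [a [Ha Hax]]].
  - exists 0%nat; unfold piece; simpl; split; [lia|lra].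
  - unfold piece in *; simpl pow.
    replace (x * (2 * 2 ^ K)) with (2 * (x * 2 ^ K)) by ring.
    destruct (Rle_lt_dec (x * 2 ^ K) (INR a + / 2)).
    + exists (2 * a)%nat; split; [simpl; lia|].
      rewrite mult_INR; simpl INR; lra.
    + exists (2 * a + 1)%nat; split; [simpl; lia|].
      rewrite plus_INR, mult_INR; simpl INR; lra.
Qed.

Lemma piece_parent K j d : (d < 2 ^ (K + j))%nat ->
  exists b, (b < 2 ^ K)%nat /\ forall x, piece (INR d) (K + j) x -> piece (INR b) K x.
Proof.
  intros Hd.
  assert (Hm : 0 <= midpoint (INR d) (K + j) <= 1).
  { apply (piece_unit d (K + j)); [assumption|].
    unfold piece; rewrite midpoint_scaled; lra. }
  destruct (piece_cover K _ Hm) as [b [Hb Hbm]].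
  exists b; split; [assumption|].
  rewrite !INR_IZR_INZ in *; apply piece_nested; assumption.
Qed.

Lemma Z_index_bounded (q : Z) L : 0 <= IZR q -> IZR q + 1 <= 2 ^ L ->
  exists c, (c < 2 ^ L)%nat /\ INR c = IZR q.
Proof.
  intros H0 H1; apply le_IZR in H0.
  exists (Z.to_nat q).
  rewrite INR_IZR_INZ, Z2Nat.id, INR_lt_pow2, INR_IZR_INZ, Z2Nat.id by assumption.
  split; [assumption|reflexivity].
Qed.

(** * Grid normal form of elements of F *)

(* The equation says that [f] maps the piece affinely onto a piece of level [L]:
   in the paper's terms, [f] has a branch [u -> v] with [|u| = K] and [|v| = L]. *)
Definition grid_affine (f : fn) (K M : nat) : Prop :=
  forall a, (a < 2 ^ K)%nat -> exists (z : Z) (L : nat), (M <= L)%nat /\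
    forall x, piece (INR a) K x -> f x * 2 ^ L = x * 2 ^ K + IZR z.

Lemma grid_affine_refine f K M j : grid_affine f K M -> grid_affine f (K + j) (M + j).
Proof.
  intros Hf a Ha; destruct (piece_parent K j a Ha) as [b [Hb Hab]].
  destruct (Hf b Hb) as [z [L [HL Hz]]].
  exists (z * Z.of_nat (2 ^ j))%Z, (L + j)%nat; split; [lia|].
  intros x Hx; rewrite mult_IZR, IZR_pow2, !pow_add, <- !Rmult_assoc, (Hz x (Hab x Hx)).
  ring.
Qed.

Definition maps_unit (f : fn) : Prop := forall x, 0 <= x <= 1 -> 0 <= f x <= 1.

Lemma grid_image_index f K L a z : maps_unit f -> (a < 2 ^ K)%nat ->
  (forall x, piece (INR a) K x -> f x * 2 ^ L = x * 2 ^ K + IZR z) ->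
  exists c, (c < 2 ^ L)%nat /\ INR c = INR a + IZR z.
Proof.
  intros fm Ha Hz; pose proof (pow2_pos K); pose proof (pow2_pos L).
  assert (Hl : piece (INR a) K (INR a / 2 ^ K))
    by (unfold piece; rewrite div_pow2_scaled; lra).
  assert (Hr : piece (INR a) K ((INR a + 1) / 2 ^ K))
    by (unfold piece; rewrite div_pow2_scaled; lra).
  pose proof (fm _ (piece_unit _ _ _ Ha Hl)) as Fl.
  pose proof (fm _ (piece_unit _ _ _ Ha Hr)) as Fr.
  pose proof (Hz _ Hl) as El; pose proof (Hz _ Hr) as Er.
  rewrite div_pow2_scaled in El, Er.
  rewrite INR_IZR_INZ, <- plus_IZR; apply Z_index_bounded;
    rewrite plus_IZR, <- INR_IZR_INZ; nra.
Qed.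

Lemma grid_affine_comp f g Kf Kg : maps_unit g ->
  grid_affine f Kf 0 -> grid_affine g Kg Kf -> grid_affine (fun x => f (g x)) Kg 0.
Proof.
  intros gm Hf Hg d Hd.
  destruct (Hg d Hd) as [z [L [HL Hgz]]].
  destruct (grid_image_index g Kg L d z gm Hd Hgz) as [c [Hc Ec]].
  destruct (Nat.le_exists_sub Kf L HL) as [i [-> _]]; rewrite Nat.add_comm in *.
  destruct (piece_parent Kf i c Hc) as [b [Hb Hcb]].
  destruct (Hf b Hb) as [w [M [_ Hfw]]].
  exists (z + w * Z.of_nat (2 ^ i))%Z, (i + M)%nat; split; [lia|].
  intros x Hx; pose proof (Hgz x Hx) as Egx.
  assert (Hgx : piece (INR b) Kf (g x)).
  { apply Hcb; unfold piece in *; rewrite Ec, Egx; lra. }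
  rewrite plus_IZR, mult_IZR, IZR_pow2, pow_add.
  transitivity ((f (g x) * 2 ^ M) * 2 ^ i); [ring|].
  rewrite (Hfw _ Hgx), pow_add in *.
  transitivity (g x * (2 ^ Kf * 2 ^ i) + IZR w * 2 ^ i); [ring|].
  rewrite Egx; ring.
Qed.

(* The levels of the image pieces of [a] are bounded by some [N]; the inverse is
   then affine on the level-[N] grid, because each of its pieces lies inside one
   image piece of [a]. *)
Lemma grid_affine_inv a b K : is_inv b a -> maps_unit b ->
  grid_affine a K 0 -> exists N, grid_affine b N 0.
Proof.
  intros Hab bm Ha.
  destruct (finite_bound (2 ^ K) (fun j L => exists z, forall x,
      piece (INR j) K x -> a x * 2 ^ L = x * 2 ^ K + IZR z)) as [N HN].
  { intros j Hj; destruct (Ha j Hj) as [z [L [_ Hz]]]; eauto. }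
  exists N; intros d Hd.
  assert (Hy0 : 0 <= midpoint (INR d) N <= 1).
  { apply (piece_unit d N); [assumption|].
    unfold piece; rewrite midpoint_scaled; lra. }
  destruct (piece_cover K _ (bm _ Hy0)) as [j [Hj Hjx]].
  destruct (HN j Hj) as [L [HLN [z Hz]]].
  destruct (Nat.le_exists_sub L N HLN) as [i [HNi _]].
  rewrite Nat.add_comm in HNi; subst N.
  assert (Hnest : forall y, piece (INR d) (L + i) y -> piece (INR j + IZR z) L y).
  { rewrite !INR_IZR_INZ, <- plus_IZR; apply piece_nested.
    rewrite plus_IZR, <- !INR_IZR_INZ; unfold piece in *.
    rewrite <- (proj2 (Hab (midpoint (INR d) (L + i)))), Hz by assumption; lra. }
  pose proof (pow2_pos K); pose proof (pow2_pos L).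
  exists (- (z * Z.of_nat (2 ^ i)))%Z, (K + i)%nat; split; [lia|].
  intros y Hy; specialize (Hnest y Hy).
  set (x := (y * 2 ^ L - IZR z) / 2 ^ K).
  assert (Ex : x * 2 ^ K = y * 2 ^ L - IZR z) by apply div_pow2_scaled.
  assert (Hx : piece (INR j) K x) by (unfold piece in *; lra).
  assert (Hax : a x = y).
  { apply (Rmult_eq_reg_r (2 ^ L)); [rewrite Hz by assumption; lra|lra]. }
  replace (b y) with x by (rewrite <- Hax; symmetry; apply Hab).
  rewrite opp_IZR, mult_IZR, IZR_pow2, !pow_add.
  transitivity ((x * 2 ^ K) * 2 ^ i); [ring|]. rewrite Ex; ring.
Qed.

(* Tree pair diagrams whose domain tree is complete; [inF_gridF] and [gridF_inF]
   show that these are exactly the elements of F. *)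
Record gridF (f : fn) : Prop := {
  gridF_out : forall x, (x < 0 \/ 1 < x) -> f x = x;
  gridF_0 : f 0 = 0;
  gridF_1 : f 1 = 1;
  gridF_unit : maps_unit f;
  gridF_affine : exists K, grid_affine f K 0 }.

Lemma gridF_comp f g : gridF f -> gridF g -> gridF (fun x => f (g x)).
Proof.
  intros [fo f0 f1 fm [Kf Hf]] [go g0 g1 gm [Kg Hg]]; split.
  - intros x Hx; rewrite go; auto.
  - rewrite g0; assumption.
  - rewrite g1; assumption.
  - intros x Hx; auto.
  - exists (Kg + Kf)%nat; apply (grid_affine_comp f g Kf); [assumption..|].
    exact (grid_affine_refine g Kg 0 Kf Hg).
Qed.

Lemma gridF_inv a b : gridF a -> is_inv b a -> gridF b.
Proof.
  intros [ao a0 a1 am [K Ha]] Hab.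
  assert (bo : forall x, (x < 0 \/ 1 < x) -> b x = x).
  { intros x Hx; rewrite <- (ao x Hx) at 1; apply Hab. }
  (* [b] cannot send a point of [0,1] outside, where [a] is the identity. *)
  assert (bm : maps_unit b).
  { intros y Hy; destruct (Rle_lt_dec 0 (b y)), (Rle_lt_dec (b y) 1); try lra;
      assert (E : a (b y) = b y) by (apply ao; lra);
      rewrite (proj2 (Hab y)) in E; lra. }
  split; [assumption| | |assumption|].
  - rewrite <- a0 at 1; apply Hab.
  - rewrite <- a1 at 1; apply Hab.
  - exact (grid_affine_inv a b K Hab bm Ha).
Qed.

Lemma powerRZ_2_sub k l : powerRZ 2 (Z.of_nat k - Z.of_nat l) = 2 ^ k / 2 ^ l.
Proof.
  unfold Z.sub; rewrite powerRZ_add, powerRZ_neg', <- !pow_powerRZ by lra.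
  unfold Rdiv; f_equal; rewrite pow_inv; reflexivity.
Qed.

Lemma grid_points K : INR 0 / 2 ^ K = 0 /\ INR (2 ^ K) / 2 ^ K = 1 /\
  forall i, INR i / 2 ^ K < INR (S i) / 2 ^ K.
Proof.
  pose proof (pow2_pos K); split; [simpl; field; lra|split; [rewrite INR_pow2; field; lra|]].
  intros i; unfold Rdiv; apply Rmult_lt_compat_r; [apply Rinv_0_lt_compat; lra|].
  rewrite S_INR; lra.
Qed.

Lemma gridF_inF f : gridF f -> inF f.
Proof.
  intros [fo f0 f1 _ [K HK]].
  destruct (finite_choice (0%Z, 0%nat) (2 ^ K) (fun a zL => forall x,
      piece (INR a) K x -> f x * 2 ^ snd zL = x * 2 ^ K + IZR (fst zL))) as [F HF].
  { intros a Ha; destruct (HK a Ha) as [z [L [_ Hz]]]; exists (z, L); exact Hz. }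
  destruct (grid_points K) as [P0 [P1 Pinc]].
  split; [exact fo|split; [exact f0|split; [exact f1|]]].
  exists (2 ^ K)%nat, (fun i => INR i / 2 ^ K),
    (fun i => (Z.of_nat K - Z.of_nat (snd (F i)))%Z),
    (fun i => IZR (fst (F i)) / 2 ^ snd (F i)).
  split; [exact P0|split; [exact P1|split]].
  - intros i Hi; split; [apply Pinc|].
    exists (Z.of_nat i), K; rewrite INR_IZR_INZ; reflexivity.
  - intros i Hi x Hx; rewrite S_INR, <- piece_iff in Hx.
    pose proof (HF i Hi x Hx) as E; pose proof (pow2_pos (snd (F i))).
    rewrite powerRZ_2_sub.
    apply (Rmult_eq_reg_r (2 ^ snd (F i))); [rewrite E; field|]; lra.
Qed.

Lemma dyadic_plus x y : dyadic x -> dyadic y -> dyadic (x + y).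
Proof.
  intros [a [k ->]] [c [l ->]].
  exists (a * Z.of_nat (2 ^ l) + c * Z.of_nat (2 ^ k))%Z, (k + l)%nat.
  rewrite plus_IZR, !mult_IZR, !IZR_pow2, pow_add.
  pose proof (pow2_pos k); pose proof (pow2_pos l); field; lra.
Qed.

Lemma dyadic_mult x y : dyadic x -> dyadic y -> dyadic (x * y).
Proof.
  intros [a [k ->]] [c [l ->]]; exists (a * c)%Z, (k + l)%nat.
  rewrite mult_IZR, pow_add; pose proof (pow2_pos k); pose proof (pow2_pos l); field; lra.
Qed.

Lemma dyadic_opp x : dyadic x -> dyadic (- x).
Proof.
  intros [a [k ->]]; exists (- a)%Z, k; rewrite opp_IZR; pose proof (pow2_pos k); field; lra.
Qed.

Lemma Z_as_nat_sub (m : Z) : m = (Z.of_nat (Z.to_nat m) - Z.of_nat (Z.to_nat (- m)))%Z.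
Proof. lia. Qed.

Lemma dyadic_powerRZ m : dyadic (powerRZ 2 m).
Proof.
  rewrite (Z_as_nat_sub m), powerRZ_2_sub.
  exists (Z.of_nat (2 ^ Z.to_nat m)), (Z.to_nat (- m)); rewrite IZR_pow2; reflexivity.
Qed.

Lemma dyadic_scaled x : dyadic x ->
  exists K0, forall K, (K0 <= K)%nat -> exists P, x * 2 ^ K = IZR P.
Proof.
  intros [a [k ->]]; exists k; intros K HK.
  destruct (Nat.le_exists_sub k K HK) as [j [-> _]].
  exists (a * Z.of_nat (2 ^ j))%Z; rewrite mult_IZR, IZR_pow2, pow_add.
  pose proof (pow2_pos k); field; lra.
Qed.

Lemma dyadic_affine_scaled m c : dyadic c -> exists K0, forall K, (K0 <= K)%nat ->
  exists z L, forall x, (powerRZ 2 m * x + c) * 2 ^ L = x * 2 ^ K + IZR z.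
Proof.
  intros [e [B ->]].
  rewrite (Z_as_nat_sub m), powerRZ_2_sub.
  set (k := Z.to_nat m); set (l := Z.to_nat (- m)).
  exists (k + B)%nat; intros K HK.
  destruct (Nat.le_exists_sub (k + B) K HK) as [j [-> _]].
  exists (e * Z.of_nat (2 ^ (l + j)))%Z, (l + B + j)%nat; intros x.
  rewrite mult_IZR, IZR_pow2, !pow_add.
  pose proof (pow2_pos l); pose proof (pow2_pos B); field; lra.
Qed.

(* The intercepts are dyadic because [f] is continuous at the dyadic breakpoints. *)
Lemma pl_intercepts_dyadic (f : fn) n p m b : f 0 = 0 -> p 0%nat = 0 ->
  (forall i, (i < n)%nat -> p i < p (S i) /\ dyadic (p i)) ->
  (forall i, (i < n)%nat -> forall x, p i <= x <= p (S i) ->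
     f x = powerRZ 2 (m i) * x + b i) ->
  forall i, (i < n)%nat -> dyadic (b i).
Proof.
  intros f0 p0 Hp Hf; induction i as [|i IH]; intros Hi.
  - destruct (Hp 0%nat Hi) as [Hlt _].
    assert (E := Hf 0%nat Hi 0); rewrite f0, p0 in E.
    replace (b 0%nat) with 0 by (rewrite E by lra; ring).
    exists 0%Z, 0%nat; simpl; field.
  - destruct (Hp i) as [Hlt _]; [lia|]; destruct (Hp (S i) Hi) as [Hlt' Hd].
    replace (b (S i)) with
      (powerRZ 2 (m i) * p (S i) + b i + - (powerRZ 2 (m (S i)) * p (S i))).
    + apply dyadic_plus; [apply dyadic_plus|apply dyadic_opp];
        try apply dyadic_mult; auto using dyadic_powerRZ with arith.
    + rewrite <- (Hf i ltac:(lia) (p (S i))), (Hf (S i) Hi (p (S i))) by lra; ring.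
Qed.

Lemma inF_maps_unit f : inF f -> maps_unit f.
Proof.
  intros [_ [f0 [f1 [n [p [m [b [p0 [pn [Hp Hf]]]]]]]]]].
  assert (Hmono : forall k, (k <= n)%nat ->
            0 <= p k /\ forall x, 0 <= x <= p k -> 0 <= f x <= f (p k)).
  { induction k as [|k IHk]; intros Hk.
    - rewrite p0; split; [lra|]; intros x Hx; replace x with 0 by lra; rewrite f0; lra.
    - destruct IHk as [Hk0 IH]; [lia|].
      destruct (Hp k) as [Hlt _]; [lia|].
      pose proof (powerRZ_lt 2 (m k) ltac:(lra)) as Hs.
      pose proof (Hf k ltac:(lia) (p k) ltac:(lra)) as Ek.
      pose proof (Hf k ltac:(lia) (p (S k)) ltac:(lra)) as ESk.
      pose proof (IH (p k) ltac:(lra)) as Hpk.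
      split; [lra|]; intros x Hx.
      destruct (Rle_lt_dec x (p k)) as [Hle|Hgt].
      + pose proof (IH x ltac:(lra)); nra.
      + rewrite (Hf k ltac:(lia) x) by lra; nra. }
  intros x Hx; destruct (Hmono n (le_n n)) as [_ H]; rewrite pn, f1 in H; auto.
Qed.

Lemma subdivision_cover (p : nat -> R) x k : p 0%nat <= x <= p (S k) ->
  exists i, (i <= k)%nat /\ p i <= x <= p (S i).
Proof.
  induction k as [|k IH]; intros Hx; [exists 0%nat; split; [lia|assumption]|].
  destruct (Rle_lt_dec x (p (S k))) as [Hle|Hgt].
  - destruct IH as [i [Hi Hxi]]; [lra|]; exists i; split; [lia|assumption].
  - exists (S k); split; [lia|lra].
Qed.

Lemma piece_between a K (l r : R) (P1 P2 : Z) :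
  l * 2 ^ K = IZR P1 -> r * 2 ^ K = IZR P2 -> l <= midpoint (INR a) K <= r ->
  forall x, piece (INR a) K x -> l <= x <= r.
Proof.
  intros El Er Hm x Hx; pose proof (pow2_pos K).
  pose proof (midpoint_scaled (INR a) K) as Em; unfold piece in Hx.
  assert (Hl : l * 2 ^ K <= midpoint (INR a) K * 2 ^ K) by (apply Rmult_le_compat_r; lra).
  assert (Hr : midpoint (INR a) K * 2 ^ K <= r * 2 ^ K) by (apply Rmult_le_compat_r; lra).
  assert (H1 : (P1 <= Z.of_nat a)%Z)
    by (apply Z_le_of_IZR_le_half; rewrite <- INR_IZR_INZ; lra).
  assert (H2 : (Z.of_nat a + 1 <= P2)%Z)
    by (apply Z_le_of_IZR_le_half; rewrite plus_IZR, <- INR_IZR_INZ; lra).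
  apply IZR_le in H1, H2; rewrite plus_IZR, <- INR_IZR_INZ in *.
  split; apply (Rmult_le_reg_r (2 ^ K)); lra.
Qed.

Lemma inF_gridF f : inF f -> gridF f.
Proof.
  intros Hf; pose proof (inF_maps_unit f Hf) as fm.
  destruct Hf as [fo [f0 [f1 [n [p [m [b [p0 [pn [Hp Hfb]]]]]]]]]].
  assert (Hn : (0 < n)%nat) by (destruct n; [rewrite p0 in pn; lra|lia]).
  assert (Hpd : forall i, (i <= n)%nat -> dyadic (p i)).
  { intros i Hi; destruct (Nat.eq_dec i n) as [->|]; [|apply Hp; lia].
    rewrite pn; exists 1%Z, 0%nat; simpl; field. }
  destruct (eventually_all n (fun i K =>
      (exists P, p i * 2 ^ K = IZR P) /\ (exists P, p (S i) * 2 ^ K = IZR P) /\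
      exists z L, forall x, (powerRZ 2 (m i) * x + b i) * 2 ^ L = x * 2 ^ K + IZR z))
    as [K HK].
  { intros i Hi.
    destruct (dyadic_scaled _ (Hpd i ltac:(lia))) as [k1 H1].
    destruct (dyadic_scaled _ (Hpd (S i) Hi)) as [k2 H2].
    destruct (dyadic_affine_scaled (m i) (b i) (pl_intercepts_dyadic f n p m b f0 p0 Hp Hfb i Hi))
      as [k3 H3].
    exists (k1 + k2 + k3)%nat; intros K' HK'.
    split; [|split]; [apply H1|apply H2|apply H3]; lia. }
  split; [assumption..|exists K].
  intros a Ha.
  assert (Hy : p 0%nat <= midpoint (INR a) K <= p (S (pred n))).
  { replace (S (pred n)) with n by lia; rewrite p0, pn.
    apply (piece_unit a K); [assumption|].
    unfold piece; rewrite midpoint_scaled; lra. }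
  destruct (subdivision_cover p _ _ Hy) as [i [Hi Hyi]].
  destruct (HK i ltac:(lia)) as [[P1 E1] [[P2 E2] [z [L Hz]]]].
  exists z, L; split; [lia|]; intros x Hx.
  rewrite (Hfb i ltac:(lia) x (piece_between a K _ _ P1 P2 E1 E2 Hyi x Hx)); apply Hz.
Qed.

Lemma inF_comp f g : inF f -> inF g -> inF (fun x => f (g x)).
Proof. intros Hf Hg; apply gridF_inF, gridF_comp; apply inF_gridF; assumption. Qed.

Lemma inF_inv f g : inF f -> is_inv g f -> inF g.
Proof. intros Hf Hg; apply gridF_inF, (gridF_inv f); [apply inF_gridF|]; assumption. Qed.

Lemma gridF_id : gridF (fun x => x).
Proof.
  split; [auto|reflexivity|reflexivity|intros x Hx; exact Hx|].
  exists 0%nat; intros a _; exists 0%Z, 0%nat; split; [lia|intros x _; ring].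
Qed.

Lemma inF_id : inF (fun x => x).
Proof. exact (gridF_inF _ gridF_id). Qed.

(** * The derived subgroup *)

Lemma is_inv_sym g f : is_inv g f -> is_inv f g.
Proof. intros H x; split; apply H. Qed.

Lemma is_inv_injective g f : is_inv g f -> Injective f.
Proof. intros H x y E; rewrite <- (proj1 (H x)), <- (proj1 (H y)), E; reflexivity. Qed.

Lemma injective_comp (f g : fn) : Injective f -> Injective g -> Injective (fun x => f (g x)).
Proof. intros Hf Hg x y E; apply Hg, Hf, E. Qed.

Definition fixes_ends (f : fn) : Prop :=
  exists e, 0 < e /\ forall x, (0 <= x <= e \/ 1 - e <= x <= 1) -> f x = x.

Lemma fixes_ends_comp f g : fixes_ends f -> fixes_ends g -> fixes_ends (fun x => f (g x)).
Proof.
  intros [e1 [He1 E1]] [e2 [He2 E2]]; exists (Rmin e1 e2).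
  split; [apply Rmin_glb_lt; assumption|].
  pose proof (Rmin_l e1 e2); pose proof (Rmin_r e1 e2).
  intros x Hx; rewrite (E2 x) by lra; apply E1; lra.
Qed.

Lemma fixes_ends_inv f g : fixes_ends f -> is_inv g f -> fixes_ends g.
Proof.
  intros [e [He E]] Hgf; exists e; split; [assumption|].
  intros x Hx; rewrite <- (E x Hx) at 1; apply Hgf.
Qed.

Definition linear_near_0 (f : fn) : Prop :=
  exists s d, 0 < s /\ 0 < d /\ forall x, 0 <= x <= d -> f x = s * x.

Definition reflect (f : fn) : fn := fun x => 1 - f (1 - x).

Lemma one_minus_involutive y : 1 - (1 - y) = y.
Proof. ring. Qed.

Lemma is_inv_reflect g f : is_inv g f -> is_inv (reflect g) (reflect f).
Proof.
  intros H x; unfold reflect; rewrite !one_minus_involutive.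
  rewrite (proj1 (H _)), (proj2 (H _)), !one_minus_involutive; split; reflexivity.
Qed.

Lemma inF_linear_near_0 f : inF f -> linear_near_0 f.
Proof.
  intros [_ [f0 [_ [n [p [m [b [p0 [pn [Hp Hf]]]]]]]]]].
  assert (Hn : (0 < n)%nat) by (destruct n; [rewrite p0 in pn; lra|lia]).
  destruct (Hp 0%nat Hn) as [Hlt _]; rewrite p0 in Hlt.
  assert (E := Hf 0%nat Hn); rewrite p0 in E.
  assert (b0 : b 0%nat = 0) by (specialize (E 0); rewrite f0 in E; rewrite E by lra; ring).
  exists (powerRZ 2 (m 0%nat)), (p 1%nat); split; [apply powerRZ_lt; lra|split; [lra|]].
  intros x Hx; rewrite E, b0 by lra; ring.
Qed.

Lemma inF_linear_near_1 f : inF f -> linear_near_0 (reflect f).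
Proof.
  intros [_ [_ [f1 [n [p [m [b [p0 [pn [Hp Hf]]]]]]]]]].
  destruct n as [|k]; [rewrite p0 in pn; lra|].
  destruct (Hp k) as [Hlt _]; [lia|]; rewrite pn in Hlt.
  assert (E := Hf k ltac:(lia)); rewrite pn in E.
  assert (b1 : b k = 1 - powerRZ 2 (m k))
    by (specialize (E 1); rewrite f1 in E; rewrite E by lra; ring).
  exists (powerRZ 2 (m k)), (1 - p k); split; [apply powerRZ_lt; lra|split; [lra|]].
  intros x Hx; unfold reflect; rewrite E, b1 by lra; ring.
Qed.

(* Maps that are linear near 0 commute there. *)
Lemma commutator_id_near_0 f g fi gi : linear_near_0 f -> linear_near_0 g ->
  is_inv fi f -> is_inv gi g ->
  exists e, 0 < e /\ forall x, 0 <= x <= e -> fi (gi (f (g x))) = x.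
Proof.
  intros [s [df [Hs [Hdf Ef]]]] [t [dg [Ht [Hdg Eg]]]] Hfi Hgi.
  exists (Rmin (Rmin df dg) (Rmin (df / t) (dg / s))).
  split; [repeat apply Rmin_glb_lt; try apply Rdiv_lt_0_compat; assumption|].
  intros x Hx.
  pose proof (Rmin_l (Rmin df dg) (Rmin (df / t) (dg / s))).
  pose proof (Rmin_r (Rmin df dg) (Rmin (df / t) (dg / s))).
  pose proof (Rmin_l df dg); pose proof (Rmin_r df dg).
  pose proof (Rmin_l (df / t) (dg / s)); pose proof (Rmin_r (df / t) (dg / s)).
  assert (Hxt : t * x <= df).
  { replace df with (t * (df / t)) by (field; lra); apply Rmult_le_compat_l; lra. }
  assert (Hxs : s * x <= dg).
  { replace dg with (s * (dg / s)) by (field; lra); apply Rmult_le_compat_l; lra. }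
  assert (Hcomm : f (g x) = g (f x)).
  { rewrite (Eg x), (Ef x), (Ef (t * x)), (Eg (s * x)) by nra; ring. }
  rewrite Hcomm, (proj1 (Hgi _)); apply Hfi.
Qed.

Lemma commutator_fixes_ends f g fi gi : inF f -> inF g -> is_inv fi f -> is_inv gi g ->
  fixes_ends (fun x => fi (gi (f (g x)))).
Proof.
  intros Hf Hg Hfi Hgi.
  destruct (commutator_id_near_0 f g fi gi (inF_linear_near_0 f Hf)
              (inF_linear_near_0 g Hg) Hfi Hgi) as [e0 [He0 E0]].
  destruct (commutator_id_near_0 (reflect f) (reflect g) (reflect fi) (reflect gi)
              (inF_linear_near_1 f Hf) (inF_linear_near_1 g Hg)
              (is_inv_reflect fi f Hfi) (is_inv_reflect gi g Hgi)) as [e1 [He1 E1]].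
  exists (Rmin e0 e1); split; [apply Rmin_glb_lt; assumption|].
  pose proof (Rmin_l e0 e1); pose proof (Rmin_r e0 e1).
  intros x [Hx|Hx]; [apply E0; lra|].
  specialize (E1 (1 - x) ltac:(lra)); unfold reflect in E1.
  rewrite !one_minus_involutive in E1; lra.
Qed.

Lemma derivedF_spec f : derivedF f -> inF f /\ Injective f /\ fixes_ends f.
Proof.
  induction 1 as [f g fi gi Hf Hg Hfi Hgi| |a b _ [Fa [Ia Ea]] _ [Fb [Ib Eb]]
                 |a b _ [Fa [Ia Ea]] Hba].
  - split; [|split].
    + apply inF_comp; [apply (inF_inv f); assumption|].
      apply inF_comp; [apply (inF_inv g); assumption|].
      apply inF_comp; assumption.
    + apply injective_comp; [apply (is_inv_injective f), is_inv_sym; assumption|].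
      apply injective_comp; [apply (is_inv_injective g), is_inv_sym; assumption|].
      apply injective_comp; [apply (is_inv_injective fi)|apply (is_inv_injective gi)];
        assumption.
    + apply commutator_fixes_ends; assumption.
  - split; [exact inF_id|split; [intros x y E; exact E|]].
    exists 1; split; [lra|reflexivity].
  - split; [apply inF_comp; assumption|split].
    + apply injective_comp; assumption.
    + apply fixes_ends_comp; assumption.
  - split; [apply (inF_inv a); assumption|split].
    + exact (is_inv_injective a b (is_inv_sym b a Hba)).
    + apply (fixes_ends_inv a); assumption.
Qed.

(** * Words and branches *)

Lemma word_of_index K a : (a < 2 ^ K)%nat ->
  exists u, length u = K /\ wval u * 2 ^ K = INR a.
Proof.
  revert a; induction K as [|K IH]; intros a Ha.
  - exists nil; simpl in *; split; [reflexivity|].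
    replace a with 0%nat by lia; simpl; ring.
  - simpl pow; destruct (Nat.lt_ge_cases a (2 ^ K)) as [Hlt|Hge].
    + destruct (IH a Hlt) as [u [Hl Hw]]; exists (false :: u); simpl.
      split; [lia|]; rewrite <- Hw; field.
    + destruct (IH (a - 2 ^ K)%nat) as [u [Hl Hw]]; [simpl in Ha; lia|].
      exists (true :: u); simpl; split; [lia|].
      rewrite minus_INR, INR_pow2 in Hw by assumption.
      replace (INR a) with (2 ^ K + (INR a - 2 ^ K)) by ring; rewrite <- Hw; field.
Qed.

Lemma wval_no_one u : ~ In true u -> wval u = 0.
Proof.
  induction u as [|[] u IH]; simpl; intros H; [reflexivity|tauto|].
  rewrite IH by tauto; field.
Qed.

Lemma wval_no_zero u : ~ In false u -> wval u * 2 ^ length u + 1 = 2 ^ length u.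
Proof.
  induction u as [|[] u IH]; simpl; intros H; [ring| |tauto].
  transitivity (wval u * 2 ^ length u + 1 + 2 ^ length u); [field|].
  rewrite IH by tauto; ring.
Qed.

Lemma interior_word K a : (0 < a)%nat -> (a + 1 < 2 ^ K)%nat ->
  exists u, length u = K /\ wval u * 2 ^ K = INR a /\ has_both_digits u.
Proof.
  intros Ha0 Ha1; destruct (word_of_index K a) as [u [Hl Hw]]; [lia|].
  exists u; split; [assumption|split; [assumption|]]; subst K.
  split; [destruct (in_dec Bool.bool_dec true u) as [|Hn]; [assumption|exfalso]
         |destruct (in_dec Bool.bool_dec false u) as [|Hn]; [assumption|exfalso]].
  - rewrite (wval_no_one u Hn) in Hw; apply lt_INR in Ha0; simpl in Ha0; lra.
  - pose proof (wval_no_zero u Hn) as E; rewrite Hw, <- INR_pow2, <- S_INR in E.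
    apply INR_eq in E; lia.
Qed.

Lemma in_word_piece u x : in_word u x <-> piece (wval u * 2 ^ length u) (length u) x.
Proof.
  unfold in_word, piece; pose proof (pow2_pos (length u)).
  assert (E : (wval u + / 2 ^ length u) * 2 ^ length u = wval u * 2 ^ length u + 1)
    by (field; lra).
  split; intros [H1 H2]; split.
  - apply Rmult_le_compat_r; lra.
  - rewrite <- E; apply Rmult_le_compat_r; lra.
  - apply (Rmult_le_reg_r (2 ^ length u)); lra.
  - apply (Rmult_le_reg_r (2 ^ length u)); lra.
Qed.

Lemma has_branches_scaled h u v x : has_branches h u v -> in_word u x ->
  h x * 2 ^ length v = x * 2 ^ length u + (wval v * 2 ^ length v - wval u * 2 ^ length u).
Proof.
  intros Hb Hx; rewrite (Hb x Hx); pose proof (pow2_pos (length v)); field; lra.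
Qed.

Lemma grid_image_interior f K L a z : maps_unit f -> Injective f -> f 0 = 0 -> f 1 = 1 ->
  (0 < a)%nat -> (a + 1 < 2 ^ K)%nat ->
  (forall x, piece (INR a) K x -> f x * 2 ^ L = x * 2 ^ K + IZR z) ->
  exists c, (0 < c)%nat /\ (c + 1 < 2 ^ L)%nat /\ INR c = INR a + IZR z.
Proof.
  intros fm If f0 f1 Ha0 Ha1 Hz.
  destruct (grid_image_index f K L a z fm ltac:(lia) Hz) as [c [Hc Ec]].
  pose proof (pow2_pos K); pose proof (pow2_pos L).
  pose proof (Hz (INR a / 2 ^ K)) as El; pose proof (Hz ((INR a + 1) / 2 ^ K)) as Er.
  unfold piece in El, Er; rewrite div_pow2_scaled in El, Er.
  specialize (El ltac:(lra)); specialize (Er ltac:(lra)).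
  exists c; split; [|split; [|assumption]].
  - destruct (Nat.eq_dec c 0) as [Hc0|]; [exfalso|lia].
    assert (E : f (INR a / 2 ^ K) = f 0).
    { rewrite f0; apply (Rmult_eq_reg_r (2 ^ L)); [|lra].
      rewrite El, <- Ec, Hc0; simpl; ring. }
    apply If in E; apply (f_equal (fun y => y * 2 ^ K)) in E.
    rewrite div_pow2_scaled, Rmult_0_l in E; apply lt_INR in Ha0; simpl in Ha0; lra.
  - destruct (Nat.eq_dec (c + 1) (2 ^ L)) as [Hc1|]; [exfalso|lia].
    assert (E : f ((INR a + 1) / 2 ^ K) = f 1).
    { rewrite f1; apply (Rmult_eq_reg_r (2 ^ L)); [|lra].
      rewrite Er, <- INR_pow2, <- Hc1, plus_INR, Ec; simpl; ring. }
    apply If in E; apply (f_equal (fun y => y * 2 ^ K)) in E.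
    rewrite div_pow2_scaled, Rmult_1_l, <- INR_pow2, <- S_INR in E.
    apply INR_eq in E; lia.
Qed.

Lemma pow2_inv_eventually_small e : 0 < e ->
  exists N, forall K, (N <= K)%nat -> / 2 ^ K <= e.
Proof.
  intros He.
  destruct (pow_lt_1_zero (/ 2) ltac:(rewrite Rabs_pos_eq; lra) e He) as [N HN].
  exists N; intros K HK; specialize (HN K HK).
  rewrite pow_inv, Rabs_pos_eq in HN; [lra|].
  left; apply Rinv_0_lt_compat, pow2_pos.
Qed.

Lemma boundary_piece K a x : (a = 0 \/ a + 1 = 2 ^ K)%nat -> piece (INR a) K x ->
  0 <= x <= / 2 ^ K \/ 1 - / 2 ^ K <= x <= 1.
Proof.
  pose proof (pow2_pos K); unfold piece.
  assert (E0 : / 2 ^ K * 2 ^ K = 1) by (field; lra).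
  assert (E1 : (1 - / 2 ^ K) * 2 ^ K = 2 ^ K - 1) by (field; lra).
  intros [->|Ha] Hx.
  - simpl in Hx; left; split; apply (Rmult_le_reg_r (2 ^ K)); lra.
  - assert (Ea : INR a + 1 = 2 ^ K)
      by (rewrite <- INR_pow2, <- Ha, plus_INR; reflexivity).
    right; split; apply (Rmult_le_reg_r (2 ^ K)); lra.
Qed.

Lemma Cl_of_grid (H : fn -> Prop) f K : inF f ->
  (forall a, (a < 2 ^ K)%nat -> exists h, H h /\ forall x, piece (INR a) K x -> f x = h x) ->
  Cl H f.
Proof.
  intros Hf Hh; split; [assumption|].
  destruct (grid_points K) as [P0 [P1 Pinc]].
  exists (2 ^ K)%nat, (fun i => INR i / 2 ^ K); split; [|split; [|split]]; auto.
  intros i Hi; destruct (Hh i Hi) as [h [Hh' E]]; exists h; split; [assumption|].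
  intros x Hx; apply E, piece_iff; rewrite <- S_INR; exact Hx.
Qed.

Lemma Cl_of_fixes_ends (H : fn -> Prop) f : H (fun x => x) ->
  (forall u v, has_both_digits u -> has_both_digits v -> exists h, H h /\ has_branches h u v) ->
  inF f -> Injective f -> fixes_ends f -> Cl H f.
Proof.
  intros Hid Hbr Hf If [e [He Ee]].
  destruct (inF_gridF f Hf) as [_ f0 f1 fm [K0 HK0]].
  destruct (pow2_inv_eventually_small e He) as [j Hj].
  pose proof (Hj (K0 + j)%nat ltac:(lia)) as Hsmall.
  pose proof (grid_affine_refine f K0 0 j HK0) as HK.
  apply (Cl_of_grid H f (K0 + j) Hf); intros a Ha.
  destruct (Nat.eq_dec a 0) as [Ha0|Ha0];
    [|destruct (Nat.eq_dec (a + 1) (2 ^ (K0 + j))) as [Ha1|Ha1]].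
  1, 2: exists (fun x => x); split; [exact Hid|]; intros x Hx;
        apply Ee; destruct (boundary_piece (K0 + j) a x ltac:(lia) Hx); [left|right]; lra.
  destruct (HK a Ha) as [z [L [_ Hz]]].
  destruct (grid_image_interior f (K0 + j) L a z fm If f0 f1 ltac:(lia) ltac:(lia) Hz)
    as [c [Hc0 [Hc1 Ec]]].
  destruct (interior_word (K0 + j) a) as [u [Hu [Eu Du]]]; [lia|lia|].
  destruct (interior_word L c) as [v [Hv [Ev Dv]]]; [assumption|assumption|].
  destruct (Hbr u v Du Dv) as [h [Hh Hb]].
  exists h; split; [assumption|]; intros x Hx.
  assert (Hxu : in_word u x) by (apply in_word_piece; rewrite Hu, Eu; exact Hx).
  pose proof (pow2_pos L).
  apply (Rmult_eq_reg_r (2 ^ L)); [|lra].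
  rewrite Hz, <- Hv, (has_branches_scaled h u v x Hb Hxu), Hu, Hv, Eu, Ev, Ec by assumption.
  ring.
Qed.

Theorem lemma2p3 (H : fn -> Prop) :
  subgroupF H ->
  (forall u v : list bool, has_both_digits u -> has_both_digits v ->
     exists h, H h /\ has_branches h u v) ->
  forall f, derivedF f -> Cl H f.
Proof.
  intros HS Hbr f Hf.
  destruct (derivedF_spec f Hf) as [HfF [Hinj Hends]].
  exact (Cl_of_fixes_ends H f (sub_id H HS) Hbr HfF Hinj Hends).
Qed.
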